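(* For all integers $m$ and $n$, the coefficients $N_{\overline{S}}(m,n)$, $N_{\overline{S}_1}(m,n)$ and $N_{\overline{S}_2}(m,n)$ are nonnegative.
   Context: $(a;q)_\infty=\prod_{k\ge0}(1-aq^k)$. Define \begin{align*} \overline{S}(z,q)&=\sum_{n=1}^\infty\frac{q^n(-q^{n+1};q)_\infty(q^{n+1};q)_\infty}{(zq^n;q)_\infty(z^{-1}q^n;q)_\infty}=\sum_{n\ge1}\sum_mN_{\overline{S}}(m,n)z^mq^n,\\ \overline{S}_1(z,q)&=\sum_{n=0}^\infty\frac{q^{2n+1}(-q^{2n+2};q)_\infty(q^{2n+2};q)_\infty}{(zq^{2n+1};q)_\infty(z^{-1}q^{2n+1};q)_\infty}=\sum_{n\ge1}\sum_mN_{\overline{S}_1}(m,n)z^mq^n,\\ \overline{S}_2(z,q)&=\sum_{n=1}^\infty\frac{q^{2n}(-q^{2n+1};q)_\infty(q^{2n+1};q)_\infty}{(zq^{2n};q)_\infty(z^{-1}q^{2n};q)_\infty}=\sum_{n\ge1}\sum_mN_{\overline{S}_2}(m,n)z^mq^n, \end{align*} the expansions being as formal power series in $q$ with Laurent polynomial coefficients in $z$. *)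

From mathcomp Require Import all_boot all_algebra.
Set Implicit Arguments. Unset Strict Implicit. Unset Printing Implicit Defensive.
Import GRing.Theory Num.Theory.
Local Open Scope ring_scope.

Definition fps (R : comNzRingType) := nat -> R.

Definition fps_one (R : comNzRingType) : fps R := fun n => (n == 0%N)%:R.

Definition fps_mul (R : comNzRingType) (f g : fps R) : fps R :=
  fun n => \sum_(i < n.+1) f i * g (n - i)%N.

Definition fps_prod (R : comNzRingType) (s : seq (fps R)) : fps R :=
  foldr (@fps_mul R) (@fps_one R) s.

Definition fps_shift (R : comNzRingType) (e : nat) (f : fps R) : fps R :=
  fun n => if (e <= n)%N then f (n - e)%N else 0.

Definition fps_lin (R : comNzRingType) (c : R) (e : nat) : fps R :=
  fun n => (n == 0%N)%:R - (if n == e then c else 0).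

(* the series 1/(1 - c q^e) = sum_j c^j q^(j e)  (used with e >= 1) *)
Definition fps_geom (R : comNzRingType) (c : R) (e : nat) : fps R :=
  fun n => if (e %| n)%N then c ^+ (n %/ e) else 0.

(* Infinite product prod_{k>=0} F k, for factors with F k = 1 + O(q^(k+1)):
   the coefficient of q^N only depends on the factors F 0, ..., F N. *)
Definition fps_infprod (R : comNzRingType) (F : nat -> fps R) : fps R :=
  fun N => fps_prod [seq F k | k <- iota 0 N.+1] N.

(* Infinite sum sum_{k>=0} F k, for terms with F k = O(q^k). *)
Definition fps_infsum (R : comNzRingType) (F : nat -> fps R) : fps R :=
  fun N => \sum_(k < N.+1) F k N.

(* (a q^s; q)_oo = prod_{k>=0} (1 - a q^(s+k)),  s >= 1 *)
Definition qpoch (R : comNzRingType) (a : R) (s : nat) : fps R :=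
  fps_infprod (fun k => fps_lin a (s + k)).

(* 1/(a q^s; q)_oo = prod_{k>=0} 1/(1 - a q^(s+k)),  s >= 1 *)
Definition qpoch_inv (R : comNzRingType) (a : R) (s : nat) : fps R :=
  fps_infprod (fun k => fps_geom a (s + k)).

(* Laurent polynomials in z with integer coefficients are represented in
   LR := Z[z][w] with w standing for z^-1; [lcoef p m] is the coefficient of
   z^m after substituting w = z^-1. *)
Definition LR := {poly {poly int}}.
Definition zz : LR := ('X : {poly int})%:P.
Definition zinv : LR := 'X.

Definition lcoef (p : LR) (m : int) : int :=
  \sum_(b < size p) (if (0 <= m + b%:Z)%R then (p`_b)`_(absz (m + b%:Z)) else 0).

(* generic summand  q^e (-q^(s);q)_oo (q^(s);q)_oo / ((z q^e;q)_oo (z^-1 q^e;q)_oo)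
   with s = e + 1 *)
Definition Sterm (e : nat) : fps LR := 
  fps_prod [:: fps_shift e (@fps_one _);
               qpoch (-1) e.+1; qpoch 1 e.+1;
               qpoch_inv zz e; qpoch_inv zinv e].

Definition Sbar : fps LR := fps_infsum (fun k => Sterm k.+1).
Definition Sbar1 : fps LR := fps_infsum (fun k => Sterm k.*2.+1).
Definition Sbar2 : fps LR := fps_infsum (fun k => Sterm k.+1.*2).

Definition N_Sbar (m : int) (n : nat) : int := lcoef (Sbar n) m.
Definition N_Sbar1 (m : int) (n : nat) : int := lcoef (Sbar1 n) m.
Definition N_Sbar2 (m : int) (n : nat) : int := lcoef (Sbar2 n) m.

From mathcomp Require Import all_boot all_algebra.
From mathcomp Require Import ring zify.
Import GRing.Theory Num.Theory.
Set Implicit Arguments. Unset Strict Implicit. Unset Printing Implicit Defensive.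
Local Open Scope ring_scope.

(* Pairing the factors of index j > e and using z z^-1 = 1,
     (1 + q^j)(1 - q^j) / ((1 - z q^j)(1 - z^-1 q^j))
       = 1/(1 - z q^j) + 1/(1 - z^-1 q^j) - 1 = 1 + sum_(k >= 1) (z^k + z^-k) q^(jk),
   so the summand is q^e / ((1 - z q^e)(1 - z^-1 q^e)) times a product of series with
   nonnegative coefficients.  With z^-1 represented by an independent variable w, the
   coefficient of q^N only depends on the truncations modulo the ideal (z w - 1, q^(N+1)),
   and reading off the coefficient of z^m kills z w - 1, so it suffices to establish
   the identity in that quotient. *)

Definition semiring_stable (R : nzRingType) (P : R -> Prop) :=
  [/\ P 0, P 1, forall x y, P x -> P y -> P (x + y)
              & forall x y, P x -> P y -> P (x * y)].

Definition coefwise (R : nzRingType) (P : R -> Prop) (p : {poly R}) :=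
  forall i, P p`_i.

Section CoefwisePredicates.
Variable R : nzRingType.
Variable P : R -> Prop.
Hypothesis stableP : semiring_stable P.

Lemma stable_prod n (F : nat -> R) :
  (forall k, P (F k)) -> P (\prod_(k < n) F k).
Proof. by case: stableP => _ P1 _ PM hF; apply: big_ind. Qed.

Lemma coefwise_stable : semiring_stable (coefwise P).
Proof.
case: stableP => P0 P1 PD PM; split.
- by move=> i; rewrite coef0.
- by move=> i; rewrite coef1; case: eqP.
- by move=> p q hp hq i; rewrite coefD; apply: PD.
- by move=> p q hp hq i; rewrite coefM; apply: big_ind => // j _; apply: PM.
Qed.

Lemma coefwiseC c : P c -> coefwise P c%:P.
Proof. by case: stableP => P0 _ _ _ hc i; rewrite coefC; case: eqP. Qed.

Lemma coefwiseXn k : coefwise P 'X^k.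
Proof. by case: stableP => P0 P1 _ _ i; rewrite coefXn; case: eqP. Qed.

End CoefwisePredicates.

Section Truncation.
Variable R : comNzRingType.

Definition trunc N (f : fps R) : {poly R} := \poly_(i < N.+1) f i.

Lemma coef_trunc N f i : (i <= N)%N -> (trunc N f)`_i = f i.
Proof. by move=> hi; rewrite coef_poly ltnS hi. Qed.

Lemma coef_fps_prod N (s : seq (fps R)) n : (n <= N)%N ->
  fps_prod s n = (\prod_(f <- s) trunc N f)`_n.
Proof.
elim: s n => [|f s IH] n hn /=; first by rewrite big_nil coef1.
rewrite big_cons coefM /fps_mul; apply: eq_bigr => j _.
have hj : (j <= n)%N by rewrite -ltnS.
by rewrite coef_trunc ?IH ?(leq_trans hj hn) ?(leq_trans (leq_subr _ _) hn).
Qed.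

Definition fps_eq1_upto k (f : fps R) :=
  f 0%N = 1 /\ forall i, (0 < i <= k)%N -> f i = 0.

Lemma coefM_eq1_upto (p q : {poly R}) n :
  q`_0 = 1 -> (forall i, (0 < i <= n)%N -> q`_i = 0) -> (p * q)`_n = p`_n.
Proof.
move=> q0 qi; rewrite coefM big_ord_recr /= subnn q0 mulr1 big1 ?add0r // => j _.
by rewrite qi ?mulr0 // subn_gt0 ltn_ord leq_subr.
Qed.

Variable F : nat -> fps R.
Hypothesis F_eq1 : forall k, fps_eq1_upto k (F k).

Lemma coef_prod_trunc_stable N n M : (n <= N)%N -> (n < M)%N ->
  (\prod_(k < M) trunc N (F k))`_n = (\prod_(k < n.+1) trunc N (F k))`_n.
Proof.
move=> hn; elim: M => // M IH; rewrite ltnS leq_eqVlt => /orP [/eqP -> //|hM].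
have [F0 Fi] := F_eq1 M.
rewrite big_ord_recr /= coefM_eq1_upto ?IH ?coef_trunc // => i /andP [i0 hi].
by rewrite coef_trunc ?Fi ?i0 ?(leq_trans hi (ltnW hM)) ?(leq_trans hi hn).
Qed.

Lemma coef_fps_infprod N n : (n <= N)%N ->
  fps_infprod F n = (\prod_(k < N.+1) trunc N (F k))`_n.
Proof.
move=> hn; rewrite /fps_infprod (coef_fps_prod _ hn) big_map.
by rewrite -{1}(subn0 n.+1) -/(index_iota 0 n.+1) big_mkord coef_prod_trunc_stable.
Qed.

End Truncation.

Section CongruenceModuloIdeal.
Variables (R : comNzRingType) (u : R) (N : nat).

Definition eqmod (p q : {poly R}) :=
  exists d e, p - q = u%:P * d + 'X^(N.+1) * e.

Lemma eqmod_refl p : eqmod p p.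
Proof. by exists 0, 0; rewrite subrr !mulr0 addr0. Qed.

Lemma eq_eqmod p q : p = q -> eqmod p q.
Proof. by move->; apply: eqmod_refl. Qed.

Lemma eqmod_trans p q r : eqmod p q -> eqmod q r -> eqmod p r.
Proof.
move=> [d [e E]] [d' [e' E']]; exists (d + d'), (e + e').
by rewrite -(subrK q p) -addrA E E'; ring.
Qed.

Lemma eqmodD p q p' q' : eqmod p p' -> eqmod q q' -> eqmod (p + q) (p' + q').
Proof.
move=> [d [e E]] [d' [e' E']]; exists (d + d'), (e + e').
by rewrite opprD addrACA E E'; ring.
Qed.

Lemma eqmodN p p' : eqmod p p' -> eqmod (- p) (- p').
Proof. by move=> [d [e E]]; exists (- d), (- e); rewrite -opprD E; ring. Qed.

Lemma eqmodM p q p' q' : eqmod p p' -> eqmod q q' -> eqmod (p * q) (p' * q').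
Proof.
move=> [d [e E]] [d' [e' E']]; exists (d * q + p' * d'), (e * q + p' * e').
have -> : p * q - p' * q' = (p - p') * q + p' * (q - q') by ring.
by rewrite E E'; ring.
Qed.

Lemma eqmod_prod n (F G : nat -> {poly R}) :
  (forall k, eqmod (F k) (G k)) -> eqmod (\prod_(k < n) F k) (\prod_(k < n) G k).
Proof.
move=> FG; elim: n => [|n IH]; first by rewrite !big_ord0; apply: eqmod_refl.
by rewrite !big_ord_recr; apply: eqmodM.
Qed.

Lemma eqmodCM d : eqmod (u%:P * d) 0.
Proof. by exists d, 0; rewrite subr0 mulr0 addr0. Qed.

Lemma eqmod_coef_upto (p q : {poly R}) : (forall i, (i <= N)%N -> p`_i = q`_i) -> eqmod p q.
Proof.
move=> pq; exists 0, (drop_poly N.+1 (p - q)); rewrite mulr0 add0r.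
rewrite -{1}(poly_take_drop N.+1 (p - q)) mulrC.
suff -> : take_poly N.+1 (p - q) = 0 by rewrite add0r.
apply/polyP=> i; rewrite coef_take_poly coef0 coefB.
by case: ltnP => // hi; rewrite pq ?subrr.
Qed.

Lemma eqmod_coef p q : eqmod p q -> exists r, p`_N = q`_N + u * r.
Proof.
move=> [d [e E]]; exists d`_N.
by rewrite -(subrK q p) E coefD coefD coefCM coefXnM ltnSn addr0 addrC.
Qed.

Lemma eqmod_inverse_factors (z w : R) (g h x : {poly R}) : z * w - 1 = u ->
  eqmod (g * (1 - z%:P * x)) 1 -> eqmod (h * (1 - w%:P * x)) 1 ->
  eqmod ((1 + x) * (1 - x) * g * h) (g + h - 1).
Proof.
move=> zw gz hw.
(* because (1 - z x) + (1 - w x) - (1 - z x) (1 - w x) = 1 - z w x^2 *)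
have -> : (1 + x) * (1 - x) * g * h =
    (g * (1 - z%:P * x)) * h + (h * (1 - w%:P * x)) * g
    - (g * (1 - z%:P * x)) * (h * (1 - w%:P * x)) + u%:P * (x * x * g * h).
  by rewrite -zw polyCB polyCM polyC1; ring.
have := eqmodD (eqmodD (eqmodD (eqmodM gz (eqmod_refl h)) (eqmodM hw (eqmod_refl g)))
  (eqmodN (eqmodM gz hw))) (eqmodCM (x * x * g * h)).
by rewrite !mul1r addr0 (addrC h).
Qed.

End CongruenceModuloIdeal.

Section TruncatedSeries.
Variables (R : comNzRingType) (u : R) (N : nat).
Local Notation eqmod := (eqmod u N).

Lemma fps_lin_eq1_upto (c : R) s k : (0 < s)%N -> fps_eq1_upto k (fps_lin c (s + k)).
Proof.
move=> s0; rewrite /fps_lin; split.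
  by rewrite eqxx [(0 == _)%N]eq_sym gtn_eqF ?addn_gt0 ?s0 // subr0.
move=> i /andP [i0 hi]; rewrite eqn0Ngt i0 ltn_eqF ?subr0 //; lia.
Qed.

Lemma fps_geom_eq1_upto (c : R) s k : (0 < s)%N -> fps_eq1_upto k (fps_geom c (s + k)).
Proof.
move=> s0; rewrite /fps_geom; split; first by rewrite dvdn0 div0n expr0.
move=> i /andP [i0 hi]; case: ifP => // /(dvdn_leq i0); lia.
Qed.

Lemma trunc_fps_infprod F : (forall k, fps_eq1_upto k (F k)) ->
  eqmod (trunc N (fps_infprod F)) (\prod_(k < N.+1) trunc N (F k)).
Proof.
by move=> F1; apply: eqmod_coef_upto => i hi; rewrite coef_trunc // (coef_fps_infprod F1 hi).
Qed.

Lemma trunc_shift_one e : eqmod (trunc N (fps_shift e (@fps_one R))) 'X^e.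
Proof.
apply: eqmod_coef_upto => i hi; rewrite coef_trunc // coefXn /fps_shift /fps_one.
by case: (leqP e i) => h; [rewrite subn_eq0 eqn_leq h andbT | rewrite ltn_eqF].
Qed.

Lemma trunc_fps_lin (c : R) j : eqmod (trunc N (fps_lin c j)) (1 - c%:P * 'X^j).
Proof.
apply: eqmod_coef_upto => i hi.
by rewrite coef_trunc // coefB coef1 coefCM coefXn /fps_lin; case: (i == j); rewrite ?mulr1 ?mulr0.
Qed.

Lemma trunc_fps_lin_high (c : R) j : (N < j)%N -> eqmod (trunc N (fps_lin c j)) 1.
Proof.
move=> hj; apply: eqmod_coef_upto => i hi.
by rewrite coef_trunc // coef1 /fps_lin (ltn_eqF (leq_ltn_trans hi hj)) subr0.
Qed.

Lemma trunc_fps_geomM_lin (c : R) j : (0 < j)%N ->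
  eqmod (trunc N (fps_geom c j) * (1 - c%:P * 'X^j)) 1.
Proof.
move=> j0; apply: eqmod_coef_upto => i hi.
rewrite mulrBr mulr1 coefB coef1 mulrCA coefCM coefMXn coef_trunc //.
case: (ltnP i j) => ij.
  rewrite mulr0 subr0 /fps_geom; case: (posnP i) => [->|i0].
    by rewrite dvdn0 div0n expr0.
  by case: ifP => // /(dvdn_leq i0); lia.
rewrite coef_trunc ?(leq_trans (leq_subr _ _) hi) // gtn_eqF ?(leq_trans j0 ij) //.
rewrite /fps_geom -(subnKC ij) dvdn_addr // divnDl // divnn j0 addKn.
by case: ifP => _; rewrite ?mulr0 ?subrr // add1n exprS subrr.
Qed.

Lemma trunc_qpoch (c : R) s : (0 < s)%N ->
  eqmod (trunc N (qpoch c s)) (\prod_(k < N) trunc N (fps_lin c (s + k))).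
Proof.
move=> s0; apply: eqmod_trans (trunc_fps_infprod (fun k => fps_lin_eq1_upto c k s0)) _.
rewrite big_ord_recr -[X in eqmod _ X]mulr1.
by apply: eqmodM; [apply: eqmod_refl | apply: trunc_fps_lin_high => /=; lia].
Qed.

Lemma trunc_qpoch_inv (c : R) s : (0 < s)%N ->
  eqmod (trunc N (qpoch_inv c s))
        (trunc N (fps_geom c s) * \prod_(k < N) trunc N (fps_geom c (s.+1 + k))).
Proof.
move=> s0; apply: eqmod_trans (trunc_fps_infprod (fun k => fps_geom_eq1_upto c k s0)) _.
rewrite big_ord_recl addn0.
by under eq_bigr do rewrite /= /bump leq0n add1n addnS -addSn; apply: eqmod_refl.
Qed.

Lemma coefwise_trunc_geom (P : R -> Prop) (c : R) j :
  P 0 -> (forall k, P (c ^+ k)) -> coefwise P (trunc N (fps_geom c j)).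
Proof.
move=> P0 Pc i; rewrite coef_poly /fps_geom.
by case: ifP => // _; case: ifP.
Qed.

End TruncatedSeries.

Lemma nonneg_int_stable : semiring_stable (fun x : int => 0 <= x).
Proof. by split=> // x y; [apply: addr_ge0 | apply: mulr_ge0]. Qed.

Definition nonneg_laurent : LR -> Prop := coefwise (coefwise (fun x : int => 0 <= x)).

Lemma nonneg_laurent_stable : semiring_stable nonneg_laurent.
Proof. exact/coefwise_stable/coefwise_stable/nonneg_int_stable. Qed.

Lemma nonneg_laurent_zz k : nonneg_laurent (zz ^+ k).
Proof.
rewrite /zz -polyC_exp.
apply: (coefwiseC (coefwise_stable nonneg_int_stable)).
exact: coefwiseXn nonneg_int_stable k.
Qed.

Lemma nonneg_laurent_zinv k : nonneg_laurent (zinv ^+ k).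
Proof. exact: coefwiseXn (coefwise_stable nonneg_int_stable) k. Qed.

Definition icoef (r : {poly int}) (t : int) : int :=
  if 0 <= t then r`_(absz t) else 0.

Lemma icoefXM r t : icoef ('X * r) (t + 1) = icoef r t.
Proof.
rewrite /icoef; case: t => n; first by rewrite -PoszD addn1 /= coefXM.
by rewrite NegzE; case: n => [|n] //=; rewrite subnn coefXM.
Qed.

Lemma lcoefE K (p : LR) m : (size p <= K)%N ->
  lcoef p m = \sum_(b < K) icoef p`_b (m + b%:Z).
Proof.
move=> hK; rewrite /lcoef (big_ord_widen K (fun b => icoef p`_b (m + b%:Z)) hK).
rewrite big_mkcond; apply: eq_bigr => b _; case: ltnP => // hb.
by rewrite /icoef (nth_default 0 hb) coef0 if_same.
Qed.

Lemma lcoefD (p q : LR) m : lcoef (p + q) m = lcoef p m + lcoef q m.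
Proof.
set K := maxn (size p) (size q).
rewrite !(@lcoefE K) ?size_polyD ?leq_maxl ?leq_maxr // -big_split.
by apply: eq_bigr => b _; rewrite /icoef coefD; case: ifP; rewrite ?coefD ?addr0.
Qed.

Lemma lcoef0 m : lcoef 0 m = 0.
Proof. by rewrite /lcoef size_poly0 big_ord0. Qed.

Lemma lcoefN (p : LR) m : lcoef (- p) m = - lcoef p m.
Proof. by apply/eqP; rewrite -subr_eq0 opprK addrC -lcoefD subrr lcoef0. Qed.

Lemma lcoef_sum_ge0 n (F : nat -> LR) m :
  (forall k, 0 <= lcoef (F k) m) -> 0 <= lcoef (\sum_(k < n) F k) m.
Proof.
move=> F0; apply: (big_ind (fun p => 0 <= lcoef p m)); rewrite ?lcoef0 // => p q hp hq.
by rewrite lcoefD addr_ge0.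
Qed.

Lemma lcoef_ge0 (p : LR) m : nonneg_laurent p -> 0 <= lcoef p m.
Proof. by move=> hp; apply: sumr_ge0 => b _; case: ifP => // _; apply: hp. Qed.

Lemma lcoef_zzM_zinvM (s : LR) m : lcoef (zz * (zinv * s)) m = lcoef s m.
Proof.
set L := (size s + size (zz * (zinv * s))%R)%N.
rewrite (@lcoefE L.+1) ?leqW ?leq_addl // (@lcoefE L s) ?leq_addr // big_ord_recl.
rewrite {1}/icoef /zz coefCM /zinv coefXM /= mulr0 coef0 if_same add0r.
apply: eq_bigr => b _; rewrite /bump /= coefCM (coefXM s) /=.
have -> : m + (1 + b)%N%:Z = (m + b%:Z) + 1 by rewrite PoszD; ring.
exact: icoefXM.
Qed.

Definition zz_zinv_sub1 : LR := zz * zinv - 1.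

Lemma lcoef_zz_zinv_sub1M (s : LR) m : lcoef (zz_zinv_sub1 * s) m = 0.
Proof. by rewrite mulrBl mul1r -mulrA lcoefD lcoefN lcoef_zzM_zinvM subrr. Qed.

Lemma lcoef_eqmod N (p q : {poly LR}) m :
  eqmod zz_zinv_sub1 N p q -> lcoef p`_N m = lcoef q`_N m.
Proof.
by move=> /eqmod_coef [r ->]; rewrite lcoefD lcoef_zz_zinv_sub1M addr0.
Qed.

Definition trunc_geom_sum N j : {poly LR} :=
  trunc N (fps_geom zz j) + trunc N (fps_geom zinv j) - 1.

Lemma trunc_Sterm_factor N j : (0 < j)%N ->
  eqmod zz_zinv_sub1 N
    (trunc N (fps_lin (-1) j) * trunc N (fps_lin 1 j) *
     trunc N (fps_geom zz j) * trunc N (fps_geom zinv j))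
    (trunc_geom_sum N j).
Proof.
move=> j0.
have hz := @trunc_fps_geomM_lin _ zz_zinv_sub1 N zz j j0.
have hw := @trunc_fps_geomM_lin _ zz_zinv_sub1 N zinv j j0.
apply: eqmod_trans (eqmod_inverse_factors (z := zz) (w := zinv) erefl hz hw).
do 2![apply: eqmodM; last exact: eqmod_refl].
have := eqmodM (trunc_fps_lin zz_zinv_sub1 N (-1) j) (trunc_fps_lin zz_zinv_sub1 N 1 j).
by rewrite polyCN polyC1 mulN1r mul1r opprK.
Qed.

Lemma nonneg_trunc_geom_sum N j : coefwise nonneg_laurent (trunc_geom_sum N j).
Proof.
have [P0 P1 PD _] := nonneg_laurent_stable.
have hz := coefwise_trunc_geom N j P0 nonneg_laurent_zz.
have hw := coefwise_trunc_geom N j P0 nonneg_laurent_zinv.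
move=> i; rewrite coefB coefD coef1; case: (posnP i) => [->|i0].
  by rewrite !coef_trunc // /fps_geom dvdn0 div0n !expr0 addrK.
by rewrite subr0; apply: PD.
Qed.

Definition Sterm_reduced N e : {poly LR} :=
  'X^e * (trunc N (fps_geom zz e) * trunc N (fps_geom zinv e)) *
  \prod_(k < N) trunc_geom_sum N (e.+1 + k).

Lemma lcoef_Sterm e N m : (0 < e)%N ->
  lcoef (Sterm e N) m = lcoef (Sterm_reduced N e)`_N m.
Proof.
move=> e0; rewrite /Sterm (coef_fps_prod _ (leqnn N)) !big_cons big_nil mulr1.
apply: lcoef_eqmod.
apply: eqmod_trans (eqmodM (trunc_shift_one _ _ e)
  (eqmodM (trunc_qpoch _ _ (-1) (ltn0Sn e)) (eqmodM (trunc_qpoch _ _ 1 (ltn0Sn e))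
  (eqmodM (trunc_qpoch_inv _ _ zz e0) (trunc_qpoch_inv _ _ zinv e0))))) _.
apply: eqmod_trans _ (eqmodM (eqmod_refl _ _ _)
  (eqmod_prod _ (fun k => @trunc_Sterm_factor N (e.+1 + k) (ltn0Sn (e + k))))).
by apply: eq_eqmod; rewrite !big_split /=; ring.
Qed.

Lemma nonneg_Sterm_reduced N e : coefwise nonneg_laurent (Sterm_reduced N e).
Proof.
have stable3 := coefwise_stable nonneg_laurent_stable.
have [P0 _ _ _] := nonneg_laurent_stable; have [_ _ _ PM] := stable3.
have hz := coefwise_trunc_geom N e P0 nonneg_laurent_zz.
have hw := coefwise_trunc_geom N e P0 nonneg_laurent_zinv.
have hX := coefwiseXn nonneg_laurent_stable e.
have hprod := stable_prod stable3 N (fun k => nonneg_trunc_geom_sum N (e.+1 + k)).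
exact: PM _ _ (PM _ _ hX (PM _ _ hz hw)) hprod.
Qed.

Lemma Sterm_ge0 e N m : (0 < e)%N -> 0 <= lcoef (Sterm e N) m.
Proof. by move=> e0; rewrite lcoef_Sterm //; apply/lcoef_ge0/nonneg_Sterm_reduced. Qed.

Theorem theorem2p16 (m : int) (n : nat) :
  0 <= N_Sbar m n /\ 0 <= N_Sbar1 m n /\ 0 <= N_Sbar2 m n.
Proof.
rewrite /N_Sbar /N_Sbar1 /N_Sbar2 /Sbar /Sbar1 /Sbar2 /fps_infsum.
have Sterms_ge0 (f : nat -> nat) : (forall k, 0 < f k)%N ->
    0 <= lcoef (\sum_(k < n.+1) Sterm (f k) n) m.
  by move=> f0; apply: (@lcoef_sum_ge0 _ (fun k => Sterm (f k) n)) => k; apply: Sterm_ge0.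
split; first exact: (Sterms_ge0 succn).
split; first exact: (Sterms_ge0 (fun k => k.*2.+1)).
by apply: (Sterms_ge0 (fun k => k.+1.*2)) => k; rewrite double_gt0.
Qed.
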